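(* For any bisimulation congruence $(C_1,C_2)$ on $(\Sigma^\ast,\Sigma^{\ast+})$, we have $(C_1,C_2)=T(M(C_1,C_2))$, where $M(C_1,C_2)$ is the pointed lasso automaton $(\Sigma^\ast/C_1,\Sigma^{\ast+}/C_2,[\epsilon]_{C_1},\sigma_1,\sigma_2,\sigma_3)$ with $\sigma_1([w])(a)=[wa]$, $\sigma_2([w])(a)=[(w,a)]$, $\sigma_3([(u,v)])(a)=[(u,va)]$, and $T$ of a pointed lasso automaton is $(\ker\delta_1^\sharp,\ker\delta^\sharp)$.
   Context: $\Sigma$ is a finite alphabet, $\Sigma^{\ast+}=\Sigma^\ast\times\Sigma^+$ the lassos. A pointed lasso automaton is $(X_1,X_2,\overline{x},\delta_1,\delta_2,\delta_3)$ with disjoint $X_1,X_2$, $\overline{x}\in X_1$, $\delta_1:X_1\times\Sigma\to X_1$, $\delta_2:X_1\times\Sigma\to X_2$, $\delta_3:X_2\times\Sigma\to X_2$; extend $\delta_1,\delta_3$ to words, set $\delta_\circ(x,av)=\delta_3(\delta_2(x,a),v)$ for $x\in X_1$ and $\delta(x,(u,v))=\delta_\circ(\delta_1(x,u),v)$. $\ker\delta_1^\sharp=\{(u,v)\mid\forall x\in X_1:\delta_1(x,u)=\delta_1(x,v)\}$, $\ker\delta^\sharp=\{((u,v),(u',v'))\mid\forall x\in X_1:\delta(x,(u,v))=\delta(x,(u',v'))\}$. A bisimulation congruence is a pair $(C_1,C_2)$ of equivalence relations on $\Sigma^\ast$ and $\Sigma^{\ast+}$ such that: $C_1$ is a monoid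 congruence on $\Sigma^\ast$; $(w,w')\in C_1$ and $((u,v),(u',v'))\in C_2$ imply $((wu,v),(w'u',v'))\in C_2$; $(u,u')\in C_1$ implies $(ua,u'a)\in C_1$ and $((u,a),(u',a))\in C_2$; $((u,v),(u',v'))\in C_2$ implies $((u,va),(u',v'a))\in C_2$ (these conditions make $M(C_1,C_2)$ well defined). *)

From mathcomp Require Import ssreflect ssrfun ssrbool eqtype ssrnat seq choice fintype.
From Stdlib Require Import ClassicalEpsilon.
Set Implicit Arguments. Unset Strict Implicit. Unset Printing Implicit Defensive.

Section Lassos.
Variable S : finType.

Definition neword := {v : seq S | v != [::]}.
Definition ne_single (a : S) : neword := exist _ [:: a] isT.
Lemma rcons_neq_nil (v : seq S) (a : S) : rcons v a != [::].
Proof. by case: v. Qed.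
Definition ne_snoc (v : neword) (a : S) : neword :=
  exist _ (rcons (sval v) a) (rcons_neq_nil (sval v) a).

Definition lasso := (seq S * neword)%type.

(* pointed lasso automata (disjointness of X1, X2 is automatic: distinct types) *)
Record plauto := PLAuto {
  X1 : Type; X2 : Type; xbar : X1;
  d1 : X1 -> S -> X1; d2 : X1 -> S -> X2; d3 : X2 -> S -> X2 }.

Definition d1w (A : plauto) (x : X1 A) (u : seq S) : X1 A := foldl (d1 (p:=A)) x u.
Definition d3w (A : plauto) (y : X2 A) (u : seq S) : X2 A := foldl (d3 (p:=A)) y u.

(* delta_circ (x, a v) = delta_3 (delta_2 (x, a), v) *)
Definition dcirc (A : plauto) (x : X1 A) (v : neword) : X2 A :=
  match sval v as s return s != [::] -> X2 A with
  | [::] => fun H => False_rect _ (Bool.diff_false_true H)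
  | a :: v' => fun _ => d3w (d2 x a) v'
  end (svalP v).

Definition delta (A : plauto) (x : X1 A) (l : lasso) : X2 A := dcirc (d1w x l.1) l.2.

Definition ker_d1 (A : plauto) (u v : seq S) : Prop :=
  forall x : X1 A, d1w x u = d1w x v.
Definition ker_d (A : plauto) (l l' : lasso) : Prop :=
  forall x : X1 A, delta x l = delta x l'.

Definition T (A : plauto) := (ker_d1 A, ker_d A).

Definition equivalence {X : Type} (R : X -> X -> Prop) :=
  (forall x, R x x) /\ (forall x y, R x y -> R y x) /\
  (forall x y z, R x y -> R y z -> R x z).

Definition bisim_congruence (C1 : seq S -> seq S -> Prop)
    (C2 : lasso -> lasso -> Prop) : Prop :=
  equivalence C1 /\ equivalence C2 /\
      (forall u u' v v', C1 u u' -> C1 v v' -> C1 (u ++ v) (u' ++ v')) /\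
      (forall w w' u v u' v', C1 w w' -> C2 (u, v) (u', v') ->
          C2 (w ++ u, v) (w' ++ u', v')) /\
      (forall u u' a, C1 u u' ->
          C1 (rcons u a) (rcons u' a) /\ C2 (u, ne_single a) (u', ne_single a)) /\
      (forall u v u' v' a, C2 (u, v) (u', v') -> C2 (u, ne_snoc v a) (u', ne_snoc v' a)).

End Lassos.

Definition quot (X : Type) (R : X -> X -> Prop) := {P : X -> Prop | exists x, P = R x}.
Definition cls (X : Type) (R : X -> X -> Prop) (x : X) : quot R :=
  exist _ (R x) (ex_intro _ x erefl).
Definition repr_q (X : Type) (R : X -> X -> Prop) (P : quot R) : X :=
  proj1_sig (constructive_indefinite_description _ (proj2_sig P)).

Definition M (S : finType) (C1 : seq S -> seq S -> Prop)
    (C2 : lasso S -> lasso S -> Prop) : plauto S :=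
  @PLAuto S (quot C1) (quot C2) (cls C1 [::])
    (fun P a => cls C1 (rcons (repr_q P) a))
    (fun P a => cls C2 (repr_q P, ne_single a))
    (fun Q a => cls C2 ((repr_q Q).1, ne_snoc (repr_q Q).2 a)).

(* In M(C1,C2), reading a word u from the state [w] leads to [wu], and reading
   a lasso (u,v) from [w] leads to [(wu,v)]; this uses only that C1 and C2 are
   compatible with appending letters. Since every state of Σ*/C1 is some [w],
   the kernels of T(M(C1,C2)) relate u and v iff C1 (wu) (wv) for all w
   (resp. C2 (wu,v) (wu',v') for all w); congruence under left concatenation
   gives this from C1 u v, and w = ε gives the converse. *)

From Stdlib Require Import ClassicalEpsilon FunctionalExtensionality PropExtensionality ProofIrrelevance.
From mathcomp Require Import all_boot.

Set Implicit Arguments.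
Unset Strict Implicit.
Unset Printing Implicit Defensive.

Section Quotient.
Variables (X : Type) (R : X -> X -> Prop).

Lemma repr_qK : cancel (@repr_q X R) (cls R).
Proof.
case=> P hP; apply: eq_sig_hprop => [? ? ?|]; first exact: proof_irrelevance.
by rewrite /repr_q; case: constructive_indefinite_description => x /= ->.
Qed.

Hypothesis R_equiv : equivalence R.

Lemma eq_cls x y : cls R x = cls R y <-> R x y.
Proof.
have [R_refl [R_sym R_trans]] := R_equiv.
split=> [/(f_equal (@proj1_sig _ _)) /= -> | Rxy]; first exact: R_refl.
apply: eq_sig_hprop => [? ? ?|/=]; first exact: proof_irrelevance.
apply: functional_extensionality => z; apply: propositional_extensionality.
by split=> [/(R_trans _ _ _ (R_sym _ _ Rxy)) | /(R_trans _ _ _ Rxy)].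
Qed.

Lemma cls_repr_q x : R (repr_q (cls R x)) x.
Proof. by apply/eq_cls; rewrite repr_qK. Qed.

End Quotient.

Section NonemptyWords.
Variable S : finType.

Definition ne_cat (v : neword S) (w : seq S) : neword S := foldl (@ne_snoc S) v w.

Lemma ne_catE v w : sval (ne_cat v w) = sval v ++ w.
Proof.
by elim: w v => [|a w IHw] v; rewrite ?cats0 // /ne_cat /= IHw /= cat_rcons.
Qed.

End NonemptyWords.

Section CanonicalAutomaton.
Variables (S : finType) (C1 : seq S -> seq S -> Prop) (C2 : lasso S -> lasso S -> Prop).

Hypotheses (C1_equiv : equivalence C1) (C2_equiv : equivalence C2).
Hypothesis C1_rcons : forall u u' a, C1 u u' -> C1 (rcons u a) (rcons u' a).
Hypothesis C2_single : forall u u' a, C1 u u' -> C2 (u, ne_single a) (u', ne_single a).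
Hypothesis C2_snoc :
  forall u v u' v' a, C2 (u, v) (u', v') -> C2 (u, ne_snoc v a) (u', ne_snoc v' a).

Local Notation MC := (M C1 C2).

Lemma d1w_cls w u : d1w (A := MC) (cls C1 w) u = cls C1 (w ++ u).
Proof.
elim: u w => [|a u IHu] w; first by rewrite cats0.
rewrite -cat_rcons -IHu /d1w /=; congr (foldl _ _ u).
by apply/(eq_cls C1_equiv)/C1_rcons; apply: cls_repr_q.
Qed.

Lemma d3w_cls u v w :
  d3w (A := MC) (cls C2 (u, v)) w = cls C2 (u, ne_cat v w).
Proof.
elim: w v => [|a w IHw] v //.
rewrite -IHw /d3w /=; congr (foldl _ _ w); apply/(eq_cls C2_equiv).
by case: (repr_q _) (cls_repr_q C2_equiv (u, v)) => u' v' /C2_snoc.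
Qed.

Lemma delta_cls w l : delta (A := MC) (cls C1 w) l = cls C2 (w ++ l.1, l.2).
Proof.
case: l => u [[|a v] nv] //.
rewrite /delta d1w_cls /dcirc /=.
have -> : cls C2 (repr_q (cls C1 (w ++ u)), ne_single a) = cls C2 (w ++ u, ne_single a).
  by apply/(eq_cls C2_equiv)/C2_single; apply: cls_repr_q.
by rewrite d3w_cls; congr (cls C2 (_, _)); apply: val_inj; rewrite /= ne_catE.
Qed.

Hypothesis C1_cat : forall u u' v v', C1 u u' -> C1 v v' -> C1 (u ++ v) (u' ++ v').
Hypothesis C2_catl :
  forall w w' u v u' v', C1 w w' -> C2 (u, v) (u', v') -> C2 (w ++ u, v) (w' ++ u', v').

Lemma ker_d1_M u v : ker_d1 MC u v <-> C1 u v.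
Proof.
split=> [/(_ (cls C1 [::])) | C1uv P].
  by rewrite !d1w_cls => /(eq_cls C1_equiv).
rewrite -(repr_qK P) !d1w_cls; apply/(eq_cls C1_equiv)/C1_cat => //.
exact: (proj1 C1_equiv).
Qed.

Lemma ker_d_M l l' : ker_d MC l l' <-> C2 l l'.
Proof.
case: l l' => [u v] [u' v']; split=> [/(_ (cls C1 [::])) | C2l P].
  by rewrite !delta_cls => /(eq_cls C2_equiv).
rewrite -(repr_qK P) !delta_cls; apply/(eq_cls C2_equiv)/C2_catl => //.
exact: (proj1 C1_equiv).
Qed.

End CanonicalAutomaton.

Theorem mainTheorem13 (S : finType) (C1 : seq S -> seq S -> Prop)
    (C2 : lasso S -> lasso S -> Prop) :
  bisim_congruence C1 C2 -> (C1, C2) = T (M C1 C2).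
Proof.
move=> [C1_equiv [C2_equiv [C1_cat [C2_catl [C_rcons C2_snoc]]]]].
have C1_rcons u u' a (C1u : C1 u u') := (C_rcons u u' a C1u).1.
have C2_single u u' a (C1u : C1 u u') := (C_rcons u u' a C1u).2.
congr pair; apply: functional_extensionality => x;
  apply: functional_extensionality => y; apply: propositional_extensionality.
- by rewrite ker_d1_M.
- by rewrite ker_d_M.
Qed.
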